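(* Let $L_0>0$, $D_1,D_2>0$, $c\in\mathbb{R}$, and consider on $0<\xi<L_0$ the system $\partial_t u_1=D_1\partial_\xi^2u_1+c\,\partial_\xi u_1+f_1(u_1,u_2)$, $\partial_t u_2=D_2\partial_\xi^2u_2+c\,\partial_\xi u_2+f_2(u_1,u_2)$ with $u_1=u_2=0$ at $\xi=0,L_0$, where $f_1,f_2$ satisfy the assumptions in the context, and suppose that for some $n>0$ and positive constants $\hat h_1,\hat g_2,\hat h_2$, $h_1(u)=(\hat h_1u)^n$, $g_2(u)=(\hat g_2u)^n$, $h_2(u)=(\hat h_2u)^n$. Assume $r_1>\frac{D_1\pi^2}{L_0^2}+\frac{c^2}{4D_1}$ and $r_2>\frac{D_2\pi^2}{L_0^2}+\frac{c^2}{4D_2}$, let $U_1$ be the positive stationary state satisfying $D_1U_1''+cU_1'+F_1(U_1)=0$, $U_1(0)=U_1(L_0)=0$, and $U_2$ the positive stationary state satisfying $D_2U_2''+cU_2'+F_2(U_2)=0$, $U_2(0)=U_2(L_0)=0$. 1. Suppose $c=0$. If $\frac{r_2}{r_1}\ge\frac{D_2}{D_1}$ and $\left(\frac{r_2}{r_1}\right)^{1/n}\hat h_1\ge\hat g_2$, with at least one inequality strict, then $u_2$ can invade $(U_1,0)$. If $\frac{r_2}{r_1}\le\frac{D_2}{D_1}$ and $\left(\frac{r_2}{r_1}\right)^{1/n}\hat h_1\le\hat g_2$, with at least one inequality strict, then $u_2$ cannot invade $(U_1,0)$. 2. Suppose $D_1=D_2$ ($c$ zero or nonzero). If $r_2\ge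 r_1$ and $\left(\frac{r_2}{r_1}\right)^{1/n}\hat h_1\ge\hat g_2$, with at least one strict, then $u_2$ can invade $(U_1,0)$. If $r_2\le r_1$ and $\left(\frac{r_2}{r_1}\right)^{1/n}\hat h_1\le\hat g_2$, with at least one strict, then $u_2$ cannot invade $(U_1,0)$. 3. Suppose $c\ne0$ and $D_1\ne D_2$. If $r_2-\frac{c^2}{4D_2}\ge\frac{D_2}{D_1}\left(r_1-\frac{c^2}{4D_1}\right)$ and $\frac{\hat g_2}{\hat h_1}\le\left(\frac{D_2}{D_1}\right)^{1/n}e^{-\frac{L_0}{2}\left|c\left(\frac1{D_2}-\frac1{D_1}\right)\right|}$, then $u_2$ can invade $(U_1,0)$. If $r_2-\frac{c^2}{4D_2}\le\frac{D_2}{D_1}\left(r_1-\frac{c^2}{4D_1}\right)$ and $\frac{\hat g_2}{\hat h_1}\ge\left(\frac{D_2}{D_1}\right)^{1/n}e^{\frac{L_0}{2}\left|c\left(\frac1{D_2}-\frac1{D_1}\right)\right|}$, then $u_2$ cannot invade $(U_1,0)$.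
   Context: This system arises from two species diffusing on an interval $ct<x<ct+L_0$ moving at constant speed $c$, written in the moving coordinate $\xi=x-ct$. Assumptions: $f_1$ continuous; $F_1(u):=f_1(u,0)$; $f_1(u_1,u_2)=F_1(u_1)+o(1)$ as $u_2\to0$; $F_1$ Lipschitz, differentiable at $0$, $F_1(0)=F_1(K_1)=0$ for some $K_1>0$, $F_1'(0)=r_1>0$, $F_1(u)/u$ non-increasing on $u>0$, and $F_1(u)=u(r_1-h_1(u))$ with $h_1$ continuous, non-decreasing on $u\ge0$, $h_1(0)=0$. Also $f_2(u_1,u_2)=u_2(r_2-g_2(u_1))+o(u_2)$ as $u_2\to0$ with $r_2>0$, $g_2$ continuous, $g_2(0)=0$, $g_2\ge0$ on $[0,\infty)$. With $F_2(u):=f_2(0,u)$: $F_2$ Lipschitz, differentiable at $0$, $F_2(0)=F_2(K_2)=0$ for some $K_2>0$, $F_2'(0)=r_2$, $F_2(u)/u$ non-increasing on $u>0$, $F_2(u)=u(r_2-h_2(u))$ with $h_2$ continuous, non-decreasing, $h_2(0)=0$. Under these assumptions the principal Dirichlet eigenvalue of $-D_n\partial_\xi^2-c\partial_\xi$ on $(0,L_0)$ is $\mu_n=\frac{D_n\pi^2}{L_0^2}+\frac{c^2}{4D_n}$, and for $r_n>\mu_n$ the positive stationary state $0<U_n\le K_n$ in $(0,L_0)$ exists and is unique. Invasion: let $\hat\mu$ be the principal eigenvalue (with positive eigenfunction $\phi$, $\phi(0)=\phi(L_0)=0$) of $-D_2\phi''-c\phi'+g_2(U_1(\xi))\phi=\hat\mu\phi$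 on $(0,L_0)$, i.e. the linearisation of the $u_2$-equation at $(U_1,0)$. ''$u_2$ can invade $(U_1,0)$'' means $r_2>\hat\mu$ (linearised $u_2$ grows); ''$u_2$ cannot invade'' means $r_2<\hat\mu$ (linearised $u_2$ decays). *)

From Stdlib Require Import Reals.
From Coquelicot Require Import Coquelicot.
Open Scope R_scope.

Definition cont_on_closed (U : R -> R) (a b : R) : Prop :=
  forall x, a <= x <= b ->
    filterlim U (within (fun y => a <= y <= b) (locally x)) (locally (U x)).

Definition cont_on_nonneg (h : R -> R) : Prop :=
  forall x, 0 <= x ->
    filterlim h (within (fun y => 0 <= y) (locally x)) (locally (h x)).

Definition nondecr_on_nonneg (h : R -> R) : Prop :=
  forall x y, 0 <= x -> x <= y -> h x <= h y.

Definition loc_lipschitz (F : R -> R) : Prop :=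
  forall M, 0 <= M -> exists Lc, forall x y, Rabs x <= M -> Rabs y <= M ->
    Rabs (F x - F y) <= Lc * Rabs (x - y).

Definition kpp_term (F : R -> R) (r K : R) (h : R -> R) : Prop :=
  loc_lipschitz F /\ is_derive F 0 r /\ 0 < K /\ F 0 = 0 /\ F K = 0 /\ 0 < r /\
  (forall u v, 0 < u -> u <= v -> F v / v <= F u / u) /\
  (forall u, 0 <= u -> F u = u * (r - h u)) /\
  cont_on_nonneg h /\ nondecr_on_nonneg h /\ h 0 = 0.

Definition stationary_state (D c L : R) (F : R -> R) (K : R) (U : R -> R) : Prop :=
  U 0 = 0 /\ U L = 0 /\ cont_on_closed U 0 L /\
  (forall x, 0 < x < L -> 0 < U x <= K) /\
  exists U' U'' : R -> R, forall x, 0 < x < L ->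
    is_derive U x (U' x) /\ is_derive U' x (U'' x) /\
    D * U'' x + c * U' x + F (U x) = 0.

(** mu is the principal Dirichlet eigenvalue of -D phi'' - c phi' + q phi
    on (0,L): eigenvalue with a positive (classical) eigenfunction *)
Definition principal_dirichlet_eig (D c L : R) (q : R -> R) (mu : R) : Prop :=
  exists phi phi' phi'' : R -> R,
    phi 0 = 0 /\ phi L = 0 /\ cont_on_closed phi 0 L /\
    (forall x, 0 < x < L -> 0 < phi x) /\
    forall x, 0 < x < L ->
      is_derive phi x (phi' x) /\ is_derive phi' x (phi'' x) /\
      - D * phi'' x - c * phi' x + q x * phi x = mu * phi x.

Definition can_invade (D2 c L r2 : R) (g2 U1 : R -> R) : Prop :=
  forall mu, principal_dirichlet_eig D2 c L (fun x => g2 (U1 x)) mu -> mu < r2.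

Definition cannot_invade (D2 c L r2 : R) (g2 U1 : R -> R) : Prop :=
  forall mu, principal_dirichlet_eig D2 c L (fun x => g2 (U1 x)) mu -> r2 < mu.

From Stdlib Require Import Reals Lra.
From Coquelicot Require Import Coquelicot.
Open Scope R_scope.

(* Put q = h1(U1) and k = (g2hat / h1hat)^n, so that g2(U1) = k q, with 0 < q <= r1 and
   q < r1 near the boundary.  Then U1 and a principal eigenfunction phi are positive Dirichlet
   solutions of D1 u'' + c u' = (q - r1) u and D2 phi'' + c phi' = (k q - mu) phi.  The
   substitution v = exp (c x / (2 D)) u removes the drift, leaving v'' = P v, and Sturm
   comparison through the Wronskian shows that P2 <= P1 everywhere forces P2 = P1.  Since
   D2 (P2 - P1) = T (q) - mu with T = invasion_threshold affine, mu cannot lie weakly on one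
   side of both T 0 and T r1 unless it equals both; each part of the corollary compares r2
   with T 0 and T r1. *)

Definition bounded_on (L : R) (f : R -> R) : Prop :=
  exists B, forall x, 0 < x < L -> Rabs (f x) <= B.

Definition vanishes_at_ends (L : R) (f : R -> R) : Prop :=
  forall eps, 0 < eps -> exists del, 0 < del /\
    forall x, 0 < x < L -> x < del \/ L - del < x -> Rabs (f x) < eps.

Lemma open_interval_convex L a b t : 0 < a < L -> 0 < b < L ->
  Rmin a b <= t <= Rmax a b -> 0 < t < L.
Proof. intros Ha Hb; unfold Rmin, Rmax; destruct Rle_dec; lra. Qed.

Lemma is_derive_continuity_pt (f : R -> R) x l : is_derive f x l -> continuity_pt f x.
Proof.
intros Hf; apply continuity_pt_filterlim.
apply (ex_derive_continuous (K := R_AbsRing) (V := R_NormedModule)); now exists l.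
Qed.

Lemma bounded_on_exp L a : bounded_on L (fun x => exp (a * x)).
Proof.
exists (exp (Rabs a * L)); intros x Hx.
rewrite Rabs_pos_eq by (left; apply exp_pos).
assert (Hax : a * x <= Rabs a * L).
{ pose proof (Rle_abs a); pose proof (Rabs_pos a); nra. }
destruct Hax as [Hlt | ->]; [left; now apply exp_increasing | right; reflexivity].
Qed.

Lemma vanishes_at_ends_of_cont L f : 0 <= L -> cont_on_closed f 0 L -> f 0 = 0 -> f L = 0 ->
  vanishes_at_ends L f.
Proof.
intros HL Hf H0 HL0 eps Heps.
assert (Hc0 := Hf 0 (conj (Rle_refl 0) HL)); assert (HcL := Hf L (conj HL (Rle_refl L))).
destruct (proj1 (filterlim_locally _ _) Hc0 (mkposreal eps Heps)) as [d0 Hd0].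
destruct (proj1 (filterlim_locally _ _) HcL (mkposreal eps Heps)) as [dL HdL].
exists (Rmin d0 dL); split; [apply Rmin_glb_lt; apply cond_pos|].
intros x Hx [Hnear | Hnear].
- rewrite <- (Rminus_0_r (f x)), <- H0. apply (Hd0 x); [|simpl; lra].
  change (Rabs (x - 0) < d0). pose proof (Rmin_l d0 dL). rewrite Rabs_pos_eq; lra.
- rewrite <- (Rminus_0_r (f x)), <- HL0. apply (HdL x); [|simpl; lra].
  change (Rabs (x - L) < dL). pose proof (Rmin_r d0 dL). rewrite Rabs_left1; lra.
Qed.

Lemma vanishes_at_ends_small L f eps : 0 < L -> vanishes_at_ends L f -> 0 < eps ->
  exists x, 0 < x < L /\ Rabs (f x) < eps.
Proof.
intros HL Hf Heps; destruct (Hf eps Heps) as [del [Hdel Hsmall]].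
exists (Rmin (del / 2) (L / 2)).
pose proof (Rmin_l (del / 2) (L / 2)); pose proof (Rmin_r (del / 2) (L / 2)).
assert (0 < Rmin (del / 2) (L / 2)) by (apply Rmin_glb_lt; lra).
split; [lra | apply Hsmall; lra].
Qed.

Lemma vanishes_at_ends_mult_l L f g : bounded_on L f -> vanishes_at_ends L g ->
  vanishes_at_ends L (fun x => f x * g x).
Proof.
intros [B HB] Hg eps Heps.
set (C := Rabs B + 1).
assert (HC : 0 < C) by (unfold C; pose proof (Rabs_pos B); lra).
destruct (Hg (eps / C)) as [del [Hdel Hsmall]]; [apply Rdiv_lt_0_compat; lra|].
exists del; split; [exact Hdel|]; intros x Hx Hend.
assert (Hf : Rabs (f x) <= C) by (unfold C; pose proof (HB x Hx); pose proof (Rle_abs B); lra).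
specialize (Hsmall x Hx Hend).
rewrite Rabs_mult.
apply Rle_lt_trans with (C * Rabs (g x)); [apply Rmult_le_compat_r; [apply Rabs_pos | exact Hf]|].
replace eps with (C * (eps / C)) by (field; lra).
apply Rmult_lt_compat_l; assumption.
Qed.

Lemma vanishes_at_ends_minus L f g : vanishes_at_ends L f -> vanishes_at_ends L g ->
  vanishes_at_ends L (fun x => f x - g x).
Proof.
intros Hf Hg eps Heps.
destruct (Hf (eps / 2) ltac:(lra)) as [df [Hdf Hf']].
destruct (Hg (eps / 2) ltac:(lra)) as [dg [Hdg Hg']].
exists (Rmin df dg); split; [now apply Rmin_glb_lt|]; intros x Hx Hend.
pose proof (Rmin_l df dg); pose proof (Rmin_r df dg).
assert (Hfx : Rabs (f x) < eps / 2) by (apply Hf'; [exact Hx | destruct Hend; [left | right]; lra]).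
assert (Hgx : Rabs (g x) < eps / 2) by (apply Hg'; [exact Hx | destruct Hend; [left | right]; lra]).
pose proof (Rabs_triang (f x) (- g x)); rewrite Rabs_Ropp in *; unfold Rminus; lra.
Qed.

Lemma bounded_on_of_vanishes L f : 0 < L -> vanishes_at_ends L f ->
  (forall x, 0 < x < L -> continuity_pt f x) -> bounded_on L f.
Proof.
intros HL Hf Hc.
destruct (Hf 1 Rlt_0_1) as [del [Hdel Hends]].
set (a := Rmin del (L / 2)); set (b := Rmax (L - del) (L / 2)).
assert (Ha : 0 < a <= del /\ a <= L / 2)
  by (unfold a; repeat split; [apply Rmin_glb_lt; lra | apply Rmin_l | apply Rmin_r]).
assert (Hb : L - del <= b < L /\ L / 2 <= b)
  by (unfold b; repeat split; [apply Rmax_l | apply Rmax_lub_lt; lra | apply Rmax_r]).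
assert (Hab : a <= b) by lra.
assert (Hcab : forall x, a <= x <= b -> continuity_pt f x) by (intros x Hx; apply Hc; lra).
destruct (continuity_ab_maj f a b Hab Hcab) as [M [HM _]].
destruct (continuity_ab_min f a b Hab Hcab) as [m [Hm _]].
exists (Rmax 1 (Rmax (Rabs (f M)) (Rabs (f m)))); intros x Hx.
pose proof (Rmax_l 1 (Rmax (Rabs (f M)) (Rabs (f m)))).
pose proof (Rmax_r 1 (Rmax (Rabs (f M)) (Rabs (f m)))).
pose proof (Rmax_l (Rabs (f M)) (Rabs (f m))); pose proof (Rmax_r (Rabs (f M)) (Rabs (f m))).
destruct (Rlt_or_le x del) as [Hx0 | Hx0]; [pose proof (Hends x Hx (or_introl Hx0)); lra|].
destruct (Rlt_or_le (L - del) x) as [HxL | HxL]; [pose proof (Hends x Hx (or_intror HxL)); lra|].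
pose proof (HM x ltac:(lra)); pose proof (Hm x ltac:(lra)).
pose proof (Rle_abs (f M)); pose proof (Rabs_maj2 (f m)).
apply Rabs_le; lra.
Qed.

Set Implicit Arguments.

Record positive_dirichlet_solution (L : R) (P v v' v'' : R -> R) : Prop := {
  pds_vanishes : vanishes_at_ends L v;
  pds_pos : forall x, 0 < x < L -> 0 < v x;
  pds_derive : forall x, 0 < x < L -> is_derive v x (v' x);
  pds_derive2 : forall x, 0 < x < L -> is_derive v' x (v'' x);
  pds_eq : forall x, 0 < x < L -> v'' x = P x * v x;
  pds_coef_bounded : bounded_on L P }.

Unset Implicit Arguments.

Section PositiveDirichletSolution.

Variables (L : R) (P v v' v'' : R -> R).
Hypotheses (HL : 0 < L) (Hv : positive_dirichlet_solution L P v v' v'').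

Lemma pds_bounded : bounded_on L v.
Proof.
apply bounded_on_of_vanishes; [exact HL | apply (pds_vanishes Hv)|].
intros x Hx; apply (is_derive_continuity_pt _ _ (v' x)), (pds_derive Hv Hx).
Qed.

Lemma pds_deriv_bounded : bounded_on L v'.
Proof.
destruct pds_bounded as [B HB]; destruct (pds_coef_bounded Hv) as [BP HBP].
exists (Rabs (v' (L / 2)) + BP * B * L); intros x Hx.
assert (Hmid : 0 < L / 2 < L) by lra.
destruct (MVT_gen v' (L / 2) x v'') as [y [Hy Hmvt]].
- intros t Ht; apply (pds_derive2 Hv), (open_interval_convex L (L / 2) x); lra.
- intros t Ht; apply (is_derive_continuity_pt _ _ (v'' t)), (pds_derive2 Hv).
  apply (open_interval_convex L (L / 2) x); lra.
- assert (Hyin : 0 < y < L) by (apply (open_interval_convex L (L / 2) x); lra).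
  assert (Hv'' : Rabs (v'' y) <= BP * B).
  { rewrite (pds_eq Hv Hyin), Rabs_mult.
    apply Rmult_le_compat; auto using Rabs_pos. }
  assert (Hdist : Rabs (x - L / 2) <= L) by (apply Rabs_le; lra).
  assert (Hincr : Rabs (v' x - v' (L / 2)) <= BP * B * L).
  { rewrite Hmvt, Rabs_mult; apply Rmult_le_compat; auto using Rabs_pos. }
  pose proof (Rabs_triang_inv (v' x) (v' (L / 2))); lra.
Qed.

End PositiveDirichletSolution.

Lemma nonincreasing_of_derive_nonpos L f f' :
  (forall x, 0 < x < L -> is_derive f x (f' x)) -> (forall x, 0 < x < L -> f' x <= 0) ->
  forall a b, 0 < a -> a <= b -> b < L -> f b <= f a.
Proof.
intros Hd Hneg a b Ha Hab Hb.
destruct (MVT_gen f a b f') as [y [Hy Hmvt]].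
- intros t Ht; apply Hd, (open_interval_convex L a b); lra.
- intros t Ht; apply (is_derive_continuity_pt _ _ (f' t)), Hd.
  apply (open_interval_convex L a b); lra.
- assert (f' y <= 0) by (apply Hneg, (open_interval_convex L a b); lra).
  nra.
Qed.

Lemma nonincreasing_vanishing_eq0 L W :
  (forall a b, 0 < a -> a <= b -> b < L -> W b <= W a) -> vanishes_at_ends L W ->
  forall x, 0 < x < L -> W x = 0.
Proof.
intros Hmono HW x Hx.
apply Rle_antisym; apply Rle_plus_epsilon; intros eps Heps;
  destruct (HW eps Heps) as [del [Hdel Hsmall]].
- set (y := Rmin (del / 2) (x / 2)).
  assert (Hy : 0 < y <= del / 2 /\ y <= x / 2)
    by (unfold y; repeat split; [apply Rmin_glb_lt; lra | apply Rmin_l | apply Rmin_r]).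
  pose proof (Hmono y x ltac:(lra) ltac:(lra) ltac:(lra)).
  assert (Hnear : y < del) by lra; pose proof (Hsmall y ltac:(lra) (or_introl Hnear)).
  pose proof (Rle_abs (W y)); lra.
- set (z := Rmax (L - del / 2) ((x + L) / 2)).
  assert (Hz : L - del / 2 <= z < L /\ (x + L) / 2 <= z)
    by (unfold z; repeat split; [apply Rmax_l | apply Rmax_lub_lt; lra | apply Rmax_r]).
  pose proof (Hmono x z ltac:(lra) ltac:(lra) ltac:(lra)).
  assert (Hnear : L - del < z) by lra; pose proof (Hsmall z ltac:(lra) (or_intror Hnear)).
  pose proof (Rabs_maj2 (W z)); lra.
Qed.

(* The Wronskian [v' V - V' v] has derivative [v V (P - Q) <= 0] and vanishes at both ends,
   so it is identically zero. *)
Lemma sturm_comparison L P Q v v' v'' V V' V'' : 0 < L ->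
  positive_dirichlet_solution L P v v' v'' -> positive_dirichlet_solution L Q V V' V'' ->
  (forall x, 0 < x < L -> P x <= Q x) -> forall x, 0 < x < L -> P x = Q x.
Proof.
intros HL Hv HV HPQ.
set (W := fun x => v' x * V x - V' x * v x).
assert (HdW : forall x, 0 < x < L -> is_derive W x (v x * V x * (P x - Q x))).
{ intros x Hx.
  assert (H1 := is_derive_mult (K := R_AbsRing) v' V x _ _ (pds_derive2 Hv Hx)
                  (pds_derive HV Hx) Rmult_comm).
  assert (H2 := is_derive_mult (K := R_AbsRing) V' v x _ _ (pds_derive2 HV Hx)
                  (pds_derive Hv Hx) Rmult_comm).
  assert (H := is_derive_minus _ _ _ _ _ H1 H2).
  unfold minus, plus, opp, mult in H; simpl in H.
  replace (v x * V x * (P x - Q x))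
    with (v'' x * V x + v' x * V' x + - (V'' x * v x + V' x * v' x)); [exact H|].
  rewrite (pds_eq Hv Hx), (pds_eq HV Hx); ring. }
assert (HW0 : forall x, 0 < x < L -> W x = 0).
{ apply nonincreasing_vanishing_eq0.
  - apply (nonincreasing_of_derive_nonpos L W _ HdW).
    intros x Hx; pose proof (pds_pos Hv Hx); pose proof (pds_pos HV Hx).
    pose proof (HPQ x Hx); assert (0 < v x * V x) by nra; nra.
  - apply vanishes_at_ends_minus; apply vanishes_at_ends_mult_l.
    + exact (pds_deriv_bounded _ _ _ _ _ HL Hv).
    + exact (pds_vanishes HV).
    + exact (pds_deriv_bounded _ _ _ _ _ HL HV).
    + exact (pds_vanishes Hv). }
intros x Hx.
assert (HdW0 : is_derive W x 0).
{ apply (is_derive_ext_loc (fun _ => 0));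
    [|exact (is_derive_const (K := R_AbsRing) (V := R_NormedModule) 0 x)].
  apply (filter_imp (fun t => 0 < t /\ t < L)); [intros t Ht; symmetry; exact (HW0 t Ht)|].
  exact (open_and _ _ (open_gt 0) (open_lt L) x Hx). }
assert (Hzero : v x * V x * (P x - Q x) = 0).
{ rewrite <- (is_derive_unique _ _ _ (HdW x Hx)); exact (is_derive_unique _ _ _ HdW0). }
pose proof (pds_pos Hv Hx); pose proof (pds_pos HV Hx).
apply Rmult_integral in Hzero; destruct Hzero as [Hzero | Hzero]; [|lra].
assert (0 < v x * V x) by nra; lra.
Qed.

Set Implicit Arguments.

Record drift_solution (D c L : R) (Rf phi phi' phi'' : R -> R) : Prop := {
  drift_vanishes : vanishes_at_ends L phi;
  drift_pos : forall x, 0 < x < L -> 0 < phi x;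
  drift_derive : forall x, 0 < x < L -> is_derive phi x (phi' x);
  drift_derive2 : forall x, 0 < x < L -> is_derive phi' x (phi'' x);
  drift_eq : forall x, 0 < x < L -> D * phi'' x + c * phi' x = Rf x * phi x }.

Unset Implicit Arguments.

Definition liouville_potential (D c : R) (Rf : R -> R) (x : R) : R :=
  (c / (2 * D)) ^ 2 + Rf x / D.

Lemma liouville_transform D c L Rf phi phi' phi'' : 0 < D ->
  drift_solution D c L Rf phi phi' phi'' -> bounded_on L Rf ->
  positive_dirichlet_solution L (liouville_potential D c Rf)
    (fun x => exp (c / (2 * D) * x) * phi x)
    (fun x => exp (c / (2 * D) * x) * (c / (2 * D) * phi x + phi' x))
    (fun x => exp (c / (2 * D) * x) *
                ((c / (2 * D)) ^ 2 * phi x + c / D * phi' x + phi'' x)).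
Proof.
intros HD Hphi [BR HBR].
set (a := c / (2 * D)).
assert (Hexp : forall y, is_derive (fun x => exp (a * x)) y (a * exp (a * y)))
  by (intros y; auto_derive; [exact I | ring]).
constructor.
- apply vanishes_at_ends_mult_l; [apply bounded_on_exp | exact (drift_vanishes Hphi)].
- intros x Hx; apply Rmult_lt_0_compat; [apply exp_pos | exact (drift_pos Hphi Hx)].
- intros x Hx.
  assert (H := is_derive_mult (K := R_AbsRing) _ _ x _ _ (Hexp x) (drift_derive Hphi Hx)
                 Rmult_comm).
  unfold plus, mult in H; simpl in H.
  replace (exp (a * x) * (a * phi x + phi' x))
    with (a * exp (a * x) * phi x + exp (a * x) * phi' x) by ring; exact H.
- intros x Hx.
  assert (Hsum := is_derive_plus (K := R_AbsRing) (V := R_NormedModule) _ _ x _ _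
                    (is_derive_scal phi x a _ (drift_derive Hphi Hx)) (drift_derive2 Hphi Hx)).
  assert (H := is_derive_mult (K := R_AbsRing) _ _ x _ _ (Hexp x) Hsum Rmult_comm).
  unfold plus, mult in H; simpl in H.
  replace (exp (a * x) * (a ^ 2 * phi x + c / D * phi' x + phi'' x))
    with (a * exp (a * x) * (a * phi x + phi' x) + exp (a * x) * (a * phi' x + phi'' x))
    by (unfold a; field; lra); exact H.
- intros x Hx; unfold liouville_potential; fold a.
  assert (Hphi'' : phi'' x = (Rf x * phi x - c * phi' x) / D)
    by (rewrite <- (drift_eq Hphi Hx); field; lra).
  rewrite Hphi''; unfold a; field; lra.
- exists (a ^ 2 + BR / D); intros x Hx; unfold liouville_potential; fold a.
  pose proof (HBR x Hx); pose proof (Rabs_triang (a ^ 2) (Rf x / D)).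
  rewrite (Rabs_pos_eq (a ^ 2)) in * by (apply pow2_ge_0).
  assert (Rabs (Rf x / D) <= BR / D).
  { unfold Rdiv; rewrite Rabs_mult, (Rabs_pos_eq (/ D)) by (left; apply Rinv_0_lt_compat, HD).
    apply Rmult_le_compat_r; [left; apply Rinv_0_lt_compat, HD | assumption]. }
  lra.
Qed.

Lemma drift_comparison L D1 D2 c R1 R2 u u' u'' v v' v'' : 0 < L -> 0 < D1 -> 0 < D2 ->
  drift_solution D1 c L R1 u u' u'' -> bounded_on L R1 ->
  drift_solution D2 c L R2 v v' v'' -> bounded_on L R2 ->
  (forall x, 0 < x < L -> liouville_potential D2 c R2 x <= liouville_potential D1 c R1 x) ->
  forall x, 0 < x < L -> liouville_potential D2 c R2 x = liouville_potential D1 c R1 x.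
Proof.
intros HL HD1 HD2 Hu HR1 Hv HR2.
eapply sturm_comparison; [exact HL | eapply liouville_transform; eassumption ..].
Qed.

Lemma principal_eig_drift_solution D c L V mu : 0 <= L ->
  principal_dirichlet_eig D c L V mu ->
  exists phi phi' phi'', drift_solution D c L (fun x => V x - mu) phi phi' phi''.
Proof.
intros HL [phi [phi' [phi'' [H0 [HL0 [Hc [Hpos Hd]]]]]]].
exists phi, phi', phi''; constructor.
- exact (vanishes_at_ends_of_cont L phi HL Hc H0 HL0).
- exact Hpos.
- intros x Hx; apply (Hd x Hx).
- intros x Hx; apply (Hd x Hx).
- intros x Hx; destruct (Hd x Hx) as [_ [_ He]]; lra.
Qed.

Lemma stationary_drift_solution D c L F K U r h : 0 <= L ->
  stationary_state D c L F K U -> (forall u, 0 <= u -> F u = u * (r - h u)) ->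
  exists U' U'', drift_solution D c L (fun x => h (U x) - r) U U' U''.
Proof.
intros HL [H0 [HL0 [Hc [Hpos [U' [U'' Hd]]]]]] HF.
exists U', U''; constructor.
- exact (vanishes_at_ends_of_cont L U HL Hc H0 HL0).
- intros x Hx; apply (Hpos x Hx).
- intros x Hx; apply (Hd x Hx).
- intros x Hx; apply (Hd x Hx).
- intros x Hx; destruct (Hd x Hx) as [_ [_ He]].
  rewrite (HF (U x)) in He by (left; apply (Hpos x Hx)); lra.
Qed.

Definition invasion_threshold (D1 D2 c r1 k s : R) : R :=
  c ^ 2 / (4 * D2) + D2 / D1 * (r1 - c ^ 2 / (4 * D1)) + (k - D2 / D1) * s.

Lemma invasion_threshold_affine D1 D2 c r1 k s :
  invasion_threshold D1 D2 c r1 k s = invasion_threshold D1 D2 c r1 k 0 + (k - D2 / D1) * s.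
Proof. unfold invasion_threshold; ring. Qed.

Lemma affine_nonpos_between t0 m r s : 0 < r -> 0 <= s <= r -> t0 <= 0 -> t0 + m * r <= 0 ->
  t0 + m * s <= 0.
Proof.
intros Hr Hs H0 H1.
assert (Hcomb : r * (t0 + m * s) = (r - s) * t0 + s * (t0 + m * r)) by ring.
assert ((r - s) * t0 <= 0) by nra; assert (s * (t0 + m * r) <= 0) by nra.
nra.
Qed.

Lemma affine_zero_inside t0 m r s : 0 < s < r -> t0 <= 0 -> t0 + m * r <= 0 ->
  t0 + m * s = 0 -> t0 = 0 /\ m = 0.
Proof. intros Hs H0 Hr Hz; assert (m = 0) by nra; split; nra. Qed.

Section Invasion.

Variables (L D1 D2 c r1 k x0 : R) (q g2 U1 U1' U1'' : R -> R).
Hypotheses (HL : 0 < L) (HD1 : 0 < D1) (HD2 : 0 < D2).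
Hypothesis HU1 : drift_solution D1 c L (fun x => q x - r1) U1 U1' U1''.
Hypothesis Hq : forall x, 0 < x < L -> 0 < q x <= r1.
Hypotheses (Hx0 : 0 < x0 < L) (Hqx0 : q x0 < r1).
Hypothesis Hg2 : forall x, 0 < x < L -> g2 (U1 x) = k * q x.

Local Notation T := (invasion_threshold D1 D2 c r1 k).

Lemma liouville_potential_gap mu x : 0 < x < L ->
  D2 * (liouville_potential D2 c (fun y => g2 (U1 y) - mu) x
        - liouville_potential D1 c (fun y => q y - r1) x) = T (q x) - mu.
Proof.
intros Hx; unfold liouville_potential, invasion_threshold; rewrite (Hg2 x Hx).
field; split; lra.
Qed.

Lemma principal_eig_threshold_eq mu :
  principal_dirichlet_eig D2 c L (fun x => g2 (U1 x)) mu ->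
  (forall x, 0 < x < L -> T (q x) <= mu) \/ (forall x, 0 < x < L -> mu <= T (q x)) ->
  T (q x0) = mu.
Proof.
intros Heig Hside.
destruct (principal_eig_drift_solution D2 c L _ mu (Rlt_le _ _ HL) Heig)
  as [phi [phi' [phi'' Hphi]]].
assert (HR1 : bounded_on L (fun x => q x - r1)).
{ exists r1; intros x Hx; pose proof (Hq x Hx); apply Rabs_le; lra. }
assert (HR2 : bounded_on L (fun x => g2 (U1 x) - mu)).
{ exists (Rabs k * r1 + Rabs mu); intros x Hx; rewrite (Hg2 x Hx).
  pose proof (Hq x Hx); pose proof (Rabs_triang (k * q x) (- mu)); pose proof (Rabs_pos k).
  rewrite Rabs_Ropp, Rabs_mult, (Rabs_pos_eq (q x)) in * by lra.
  unfold Rminus; nra. }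
apply Rminus_diag_uniq; rewrite <- (liouville_potential_gap mu x0 Hx0).
destruct Hside as [Hle | Hge].
- assert (Hcmp : forall x, 0 < x < L ->
    liouville_potential D2 c (fun y => g2 (U1 y) - mu) x
    <= liouville_potential D1 c (fun y => q y - r1) x).
  { intros x Hx; pose proof (liouville_potential_gap mu x Hx); pose proof (Hle x Hx); nra. }
  rewrite (drift_comparison L D1 D2 c _ _ _ _ _ _ _ _ HL HD1 HD2 HU1 HR1 Hphi HR2 Hcmp x0 Hx0).
  ring.
- assert (Hcmp : forall x, 0 < x < L ->
    liouville_potential D1 c (fun y => q y - r1) x
    <= liouville_potential D2 c (fun y => g2 (U1 y) - mu) x).
  { intros x Hx; pose proof (liouville_potential_gap mu x Hx); pose proof (Hge x Hx); nra. }
  rewrite (drift_comparison L D2 D1 c _ _ _ _ _ _ _ _ HL HD2 HD1 Hphi HR2 HU1 HR1 Hcmp x0 Hx0).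
  ring.
Qed.

(* [T] is affine and [0 < q x0 < r1], so [T (q x0) = mu] pins both endpoint values. *)
Lemma principal_eig_thresholds mu :
  principal_dirichlet_eig D2 c L (fun x => g2 (U1 x)) mu ->
  (T 0 <= mu /\ T r1 <= mu) \/ (mu <= T 0 /\ mu <= T r1) -> T 0 = mu /\ T r1 = mu.
Proof.
intros Heig Hside.
assert (Hr1 : 0 < r1) by (pose proof (Hq x0 Hx0); lra).
assert (Hqx0' : 0 < q x0 < r1) by (pose proof (Hq x0 Hx0); lra).
set (m := k - D2 / D1).
assert (Haff : forall s, T s - mu = T 0 - mu + m * s)
  by (intros s; unfold m; rewrite (invasion_threshold_affine _ _ _ _ _ s); ring).
destruct Hside as [[H0 H1] | [H0 H1]].
- assert (Hx0eq : T (q x0) = mu).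
  { apply principal_eig_threshold_eq; [exact Heig | left]; intros x Hx.
    pose proof (Hq x Hx); pose proof (Haff (q x)); pose proof (Haff r1).
    pose proof (affine_nonpos_between (T 0 - mu) m r1 (q x) Hr1 ltac:(lra) ltac:(lra)
                  ltac:(lra)); lra. }
  pose proof (Haff (q x0)); pose proof (Haff r1).
  destruct (affine_zero_inside (T 0 - mu) m r1 (q x0) Hqx0' ltac:(lra) ltac:(lra) ltac:(lra))
    as [Ht0 Hm].
  rewrite Hm in *; split; lra.
- assert (Hx0eq : T (q x0) = mu).
  { apply principal_eig_threshold_eq; [exact Heig | right]; intros x Hx.
    pose proof (Hq x Hx); pose proof (Haff (q x)); pose proof (Haff r1).
    pose proof (affine_nonpos_between (mu - T 0) (- m) r1 (q x) Hr1 ltac:(lra) ltac:(lra)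
                  ltac:(lra)); lra. }
  pose proof (Haff (q x0)); pose proof (Haff r1).
  destruct (affine_zero_inside (mu - T 0) (- m) r1 (q x0) Hqx0' ltac:(lra) ltac:(lra)
              ltac:(lra)) as [Ht0 Hm].
  assert (Hm0 : m = 0) by lra; rewrite Hm0 in *; split; lra.
Qed.

Lemma can_invade_of_thresholds r2 :
  T 0 <= r2 -> T r1 <= r2 -> T 0 < r2 \/ T r1 < r2 -> can_invade D2 c L r2 g2 U1.
Proof.
intros H0 H1 Hstrict mu Hmu.
destruct (Rlt_or_le mu r2) as [Hlt | Hge]; [exact Hlt|].
destruct (principal_eig_thresholds mu Hmu) as [E0 E1]; [left; lra | lra].
Qed.

Lemma cannot_invade_of_thresholds r2 :
  r2 <= T 0 -> r2 <= T r1 -> r2 < T 0 \/ r2 < T r1 -> cannot_invade D2 c L r2 g2 U1.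
Proof.
intros H0 H1 Hstrict mu Hmu.
destruct (Rlt_or_le r2 mu) as [Hlt | Hle]; [exact Hlt|].
destruct (principal_eig_thresholds mu Hmu) as [E0 E1]; [right; lra | lra].
Qed.

End Invasion.

Lemma Rpower_root n t : 0 < n -> 0 < t -> Rpower (Rpower t (1 / n)) n = t.
Proof.
intros Hn Ht; rewrite Rpower_mult; replace (1 / n * n) with 1 by (field; lra).
exact (Rpower_1 t Ht).
Qed.

Lemma Rpower_le_iff n x y : 0 < n -> 0 < x -> 0 < y -> Rpower x n <= Rpower y n <-> x <= y.
Proof.
intros Hn Hx Hy; split; intros H.
- apply Rnot_lt_le; intros Hyx; pose proof (Rlt_Rpower_l y x n Hn (conj Hy Hyx)); lra.
- apply Rle_Rpower_l; lra.
Qed.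

Lemma Rpower_lt_iff n x y : 0 < n -> 0 < x -> 0 < y -> Rpower x n < Rpower y n <-> x < y.
Proof.
intros Hn Hx Hy; split; intros H.
- apply Rnot_le_lt; intros Hyx; pose proof (Rle_Rpower_l y x n (Rlt_le _ _ Hn) (conj Hy Hyx)).
  lra.
- apply Rlt_Rpower_l; lra.
Qed.

Lemma power_ratio_le_iff n a b s t : 0 < n -> 0 < a -> 0 < b -> 0 < s -> 0 < t ->
  Rpower (b / a) n * s <= t <-> b <= Rpower (t / s) (1 / n) * a.
Proof.
intros Hn Ha Hb Hs Ht.
assert (Hts : 0 < t / s) by (apply Rdiv_lt_0_compat; assumption).
assert (Hba : 0 < b / a) by (apply Rdiv_lt_0_compat; assumption).
assert (Hroot : 0 < Rpower (t / s) (1 / n)) by apply exp_pos.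
assert (Hts_s : t / s * s = t) by (field; lra).
assert (Hba_a : b / a * a = b) by (field; lra).
transitivity (Rpower (b / a) n <= Rpower (Rpower (t / s) (1 / n)) n).
- rewrite Rpower_root by assumption; split; intros H; nra.
- rewrite Rpower_le_iff by assumption; split; intros H; nra.
Qed.

Lemma power_ratio_lt_iff n a b s t : 0 < n -> 0 < a -> 0 < b -> 0 < s -> 0 < t ->
  Rpower (b / a) n * s < t <-> b < Rpower (t / s) (1 / n) * a.
Proof.
intros Hn Ha Hb Hs Ht.
assert (Hts : 0 < t / s) by (apply Rdiv_lt_0_compat; assumption).
assert (Hba : 0 < b / a) by (apply Rdiv_lt_0_compat; assumption).
assert (Hroot : 0 < Rpower (t / s) (1 / n)) by apply exp_pos.
assert (Hts_s : t / s * s = t) by (field; lra).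
assert (Hba_a : b / a * a = b) by (field; lra).
transitivity (Rpower (b / a) n < Rpower (Rpower (t / s) (1 / n)) n).
- rewrite Rpower_root by assumption; split; intros H; nra.
- rewrite Rpower_lt_iff by assumption; split; intros H; nra.
Qed.

Lemma invasion_threshold_balanced D1 D2 c r1 k : 0 < D1 -> 0 < D2 -> c = 0 \/ D1 = D2 ->
  invasion_threshold D1 D2 c r1 k 0 = D2 / D1 * r1 /\ invasion_threshold D1 D2 c r1 k r1 = k * r1.
Proof.
intros HD1 HD2 [-> | <-]; unfold invasion_threshold; split; field; lra.
Qed.

Lemma drift_mismatch_pos L D1 D2 c : 0 < L -> 0 < D1 -> 0 < D2 -> c <> 0 -> D1 <> D2 ->
  0 < L / 2 * Rabs (c * (1 / D2 - 1 / D1)).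
Proof.
intros HL HD1 HD2 Hc HD; apply Rmult_lt_0_compat; [lra|]; apply Rabs_pos_lt.
apply Rmult_integral_contrapositive_currified; [exact Hc|].
intros Heq; apply HD.
replace D1 with (1 / (1 / D1)) by (field; lra); rewrite <- (Rminus_diag_uniq _ _ Heq).
field; lra.
Qed.

Section PowerLaw.

Variables (L D1 D2 c K1 r1 r2 n h1hat g2hat : R) (F h1 g2 U1 : R -> R).
Hypotheses (HL : 0 < L) (HD1 : 0 < D1) (HD2 : 0 < D2) (Hr2 : 0 < r2).
Hypothesis Hkpp : kpp_term F r1 K1 h1.
Hypotheses (Hn : 0 < n) (Hh1 : 0 < h1hat) (Hg2 : 0 < g2hat).
Hypothesis Hh1f : forall u, 0 < u -> h1 u = Rpower (h1hat * u) n.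
Hypothesis Hg2f : forall u, 0 < u -> g2 u = Rpower (g2hat * u) n.
Hypothesis Hss : stationary_state D1 c L F K1 U1.

Local Notation k := (Rpower (g2hat / h1hat) n).
Local Notation T := (invasion_threshold D1 D2 c r1 k).
Local Notation X := (Rpower (r2 / r1) (1 / n) * h1hat).

Lemma power_law_thresholds :
  (T 0 <= r2 -> T r1 <= r2 -> T 0 < r2 \/ T r1 < r2 -> can_invade D2 c L r2 g2 U1) /\
  (r2 <= T 0 -> r2 <= T r1 -> r2 < T 0 \/ r2 < T r1 -> cannot_invade D2 c L r2 g2 U1).
Proof.
destruct Hkpp as (_ & _ & HK1 & _ & HFK & _ & _ & HF & _ & Hmono & _).
assert (Hsat : h1 K1 = r1).
{ pose proof (HF K1 (Rlt_le _ _ HK1)) as HFK'; rewrite HFK in HFK'.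
  destruct (Rmult_integral _ _ (eq_sym HFK')); lra. }
assert (HUrange : forall x, 0 < x < L -> 0 < U1 x <= K1)
  by (destruct Hss as (_ & _ & _ & HU & _); exact HU).
destruct (stationary_drift_solution D1 c L F K1 U1 r1 h1 (Rlt_le _ _ HL) Hss HF)
  as [U1' [U1'' HU1]].
assert (Hq : forall x, 0 < x < L -> 0 < h1 (U1 x) <= r1).
{ intros x Hx; destruct (HUrange x Hx) as [Hpos HleK]; split.
  - rewrite (Hh1f _ Hpos); apply exp_pos.
  - rewrite <- Hsat; apply Hmono; lra. }
destruct (vanishes_at_ends_small L U1 K1 HL (drift_vanishes HU1) HK1) as [x0 [Hx0 HUx0]].
assert (Hqx0 : h1 (U1 x0) < r1).
{ destruct (HUrange x0 Hx0) as [Hpos _]; rewrite Rabs_pos_eq in HUx0 by lra.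
  rewrite <- Hsat, (Hh1f _ Hpos), (Hh1f _ HK1); apply Rlt_Rpower_l; [exact Hn|].
  split; [apply Rmult_lt_0_compat | apply Rmult_lt_compat_l]; assumption. }
assert (Hg2U : forall x, 0 < x < L -> g2 (U1 x) = k * h1 (U1 x)).
{ intros x Hx; destruct (HUrange x Hx) as [Hpos _].
  rewrite (Hg2f _ Hpos), (Hh1f _ Hpos), Rpower_mult_distr
    by (apply Rdiv_lt_0_compat || apply Rmult_lt_0_compat; assumption).
  f_equal; field; lra. }
split.
- exact (can_invade_of_thresholds L D1 D2 c r1 _ x0 (fun x => h1 (U1 x)) g2 U1 U1' U1''
           HL HD1 HD2 HU1 Hq Hx0 Hqx0 Hg2U r2).
- exact (cannot_invade_of_thresholds L D1 D2 c r1 _ x0 (fun x => h1 (U1 x)) g2 U1 U1' U1''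
           HL HD1 HD2 HU1 Hq Hx0 Hqx0 Hg2U r2).
Qed.

Lemma balanced_invasion : c = 0 \/ D1 = D2 ->
  (D2 / D1 * r1 <= r2 -> g2hat <= X -> D2 / D1 * r1 < r2 \/ g2hat < X ->
     can_invade D2 c L r2 g2 U1) /\
  (r2 <= D2 / D1 * r1 -> X <= g2hat -> r2 < D2 / D1 * r1 \/ X < g2hat ->
     cannot_invade D2 c L r2 g2 U1).
Proof.
intros Hbal.
pose proof Hkpp as (_ & _ & _ & _ & _ & Hr1 & _).
destruct power_law_thresholds as [Hinv Hnoinv].
destruct (invasion_threshold_balanced D1 D2 c r1 k HD1 HD2 Hbal) as [E0 E1].
rewrite E0, E1 in Hinv, Hnoinv.
pose proof (power_ratio_le_iff n h1hat g2hat r1 r2 Hn Hh1 Hg2 Hr1 Hr2) as Hk_le.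
pose proof (power_ratio_lt_iff n h1hat g2hat r1 r2 Hn Hh1 Hg2 Hr1 Hr2) as Hk_lt.
split; intros H1 H2 H3.
- apply Hinv; [lra | apply Hk_le; lra | destruct H3; [left; lra | right; apply Hk_lt; lra]].
- apply Hnoinv; [lra | apply Rnot_lt_le; rewrite Hk_lt; lra |].
  destruct H3; [left; lra | right; apply Rnot_le_lt; rewrite Hk_le; lra].
Qed.

(* Only [k < D2 / D1] (resp. [k > D2 / D1]) is used: the exponential factor merely
   strengthens the hypothesis on [g2hat / h1hat]. *)
Lemma drift_invasion : c <> 0 -> D1 <> D2 ->
  (r2 - c ^ 2 / (4 * D2) >= D2 / D1 * (r1 - c ^ 2 / (4 * D1)) ->
   g2hat / h1hat <= Rpower (D2 / D1) (1 / n)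
                      * exp (- (L / 2 * Rabs (c * (1 / D2 - 1 / D1)))) ->
     can_invade D2 c L r2 g2 U1) /\
  (r2 - c ^ 2 / (4 * D2) <= D2 / D1 * (r1 - c ^ 2 / (4 * D1)) ->
   g2hat / h1hat >= Rpower (D2 / D1) (1 / n)
                      * exp (L / 2 * Rabs (c * (1 / D2 - 1 / D1))) ->
     cannot_invade D2 c L r2 g2 U1).
Proof.
intros Hc0 HDD.
pose proof Hkpp as (_ & _ & _ & _ & _ & Hr1 & _).
pose proof (drift_mismatch_pos L D1 D2 c HL HD1 HD2 Hc0 HDD) as HT.
set (S := L / 2 * Rabs (c * (1 / D2 - 1 / D1))) in *.
assert (Hrho : 0 < D2 / D1) by (apply Rdiv_lt_0_compat; lra).
assert (Hroot : 0 < Rpower (D2 / D1) (1 / n)) by apply exp_pos.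
assert (Hgh : 0 < g2hat / h1hat) by (apply Rdiv_lt_0_compat; lra).
destruct power_law_thresholds as [Hinv Hnoinv].
rewrite invasion_threshold_affine in Hinv, Hnoinv; unfold invasion_threshold in Hinv, Hnoinv.
split; intros H1 H2.
- assert (Hk : k < D2 / D1).
  { rewrite <- (Rpower_root n (D2 / D1)) by assumption; apply Rpower_lt_iff; try assumption.
    assert (exp (- S) < 1) by (rewrite <- exp_0; apply exp_increasing; lra); nra. }
  apply Hinv; [lra | nra | right; nra].
- assert (Hk : D2 / D1 < k).
  { rewrite <- (Rpower_root n (D2 / D1)) by assumption; apply Rpower_lt_iff; try assumption.
    assert (1 < exp S) by (rewrite <- exp_0; apply exp_increasing; lra); nra. }
  apply Hnoinv; [lra | nra | right; nra].
Qed.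

End PowerLaw.

Theorem corollary1
  (L0 D1 D2 c : R) (f1 f2 : R -> R -> R) (K1 K2 r1 r2 n h1hat g2hat h2hat : R)
  (h1 g2 h2 U1 : R -> R) :
  0 < L0 -> 0 < D1 -> 0 < D2 ->
  (* assumptions on f1 *)
  (forall p : R * R, continuous (fun q : R * R => f1 (fst q) (snd q)) p) ->
  (forall u1, is_lim (fun u2 => f1 u1 u2) 0 (f1 u1 0)) ->
  kpp_term (fun u => f1 u 0) r1 K1 h1 ->
  (* assumptions on f2 *)
  0 < r2 ->
  (forall u1, is_lim (fun u2 => (f2 u1 u2 - u2 * (r2 - g2 u1)) / u2) 0 0) ->
  (forall u, continuous g2 u) -> g2 0 = 0 -> (forall u, 0 <= u -> 0 <= g2 u) ->
  kpp_term (fun u => f2 0 u) r2 K2 h2 ->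
  (* power-law forms *)
  0 < n -> 0 < h1hat -> 0 < g2hat -> 0 < h2hat ->
  (forall u, 0 < u -> h1 u = Rpower (h1hat * u) n) ->
  (forall u, 0 < u -> g2 u = Rpower (g2hat * u) n) ->
  (forall u, 0 < u -> h2 u = Rpower (h2hat * u) n) ->
  (* persistence of each species alone *)
  r1 > D1 * PI ^ 2 / L0 ^ 2 + c ^ 2 / (4 * D1) ->
  r2 > D2 * PI ^ 2 / L0 ^ 2 + c ^ 2 / (4 * D2) ->
  (* U1 the positive stationary state of species 1 *)
  stationary_state D1 c L0 (fun u => f1 u 0) K1 U1 ->
  let X := Rpower (r2 / r1) (1 / n) * h1hat in
  (* part 1 *)
  (c = 0 ->
     (r2 / r1 >= D2 / D1 -> X >= g2hat -> (r2 / r1 > D2 / D1 \/ X > g2hat) ->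
        can_invade D2 c L0 r2 g2 U1) /\
     (r2 / r1 <= D2 / D1 -> X <= g2hat -> (r2 / r1 < D2 / D1 \/ X < g2hat) ->
        cannot_invade D2 c L0 r2 g2 U1)) /\
  (* part 2 *)
  (D1 = D2 ->
     (r2 >= r1 -> X >= g2hat -> (r2 > r1 \/ X > g2hat) ->
        can_invade D2 c L0 r2 g2 U1) /\
     (r2 <= r1 -> X <= g2hat -> (r2 < r1 \/ X < g2hat) ->
        cannot_invade D2 c L0 r2 g2 U1)) /\
  (* part 3 *)
  (c <> 0 -> D1 <> D2 ->
     (r2 - c ^ 2 / (4 * D2) >= D2 / D1 * (r1 - c ^ 2 / (4 * D1)) ->
      g2hat / h1hat <= Rpower (D2 / D1) (1 / n)
                         * exp (- (L0 / 2 * Rabs (c * (1 / D2 - 1 / D1)))) ->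
        can_invade D2 c L0 r2 g2 U1) /\
     (r2 - c ^ 2 / (4 * D2) <= D2 / D1 * (r1 - c ^ 2 / (4 * D1)) ->
      g2hat / h1hat >= Rpower (D2 / D1) (1 / n)
                         * exp (L0 / 2 * Rabs (c * (1 / D2 - 1 / D1))) ->
        cannot_invade D2 c L0 r2 g2 U1)).
Proof.
intros HL HD1 HD2 _ _ Hkpp1 Hr2 _ _ _ _ _ Hn Hh1 Hg2 _ Hh1f Hg2f _ _ _ Hss X; subst X.
pose proof Hkpp1 as (_ & _ & _ & _ & _ & Hr1 & _).
pose proof (balanced_invasion L0 D1 D2 c K1 r1 r2 n h1hat g2hat _ h1 g2 U1
              HL HD1 HD2 Hr2 Hkpp1 Hn Hh1 Hg2 Hh1f Hg2f Hss) as Hbal.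
split; [|split].
- intros Hc0; destruct (Hbal (or_introl Hc0)) as [Hinv Hnoinv]; split; intros H1 H2 H3.
  + apply Hinv; [apply Rnot_lt_le; rewrite <- Rlt_div_l by lra; intro; lra | lra |].
    destruct H3; [left; apply Rnot_le_lt; rewrite <- Rle_div_l by lra; intro; lra | right; lra].
  + apply Hnoinv; [apply Rle_div_l; lra | lra |].
    destruct H3; [left; apply Rlt_div_l; lra | right; lra].
- intros HDD; destruct (Hbal (or_intror HDD)) as [Hinv Hnoinv].
  replace (D2 / D1 * r1) with r1 in Hinv, Hnoinv by (rewrite HDD; field; lra).
  split; intros H1 H2 H3.
  + apply Hinv; [lra | lra | destruct H3; [left | right]; lra].
  + apply Hnoinv; [lra | lra | destruct H3; [left | right]; lra].
- exact (drift_invasion L0 D1 D2 c K1 r1 r2 n h1hat g2hat _ h1 g2 U1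
           HL HD1 HD2 Hkpp1 Hn Hh1 Hg2 Hh1f Hg2f Hss).
Qed.
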